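(* Let $k\ge 1$ be an integer and $c$ a real number with $40\le c\le k$. Let $F$ be the distribution on $\{0,1\}$ with $\mathbb{P}(1) = c/k$. Then $BRev(F^k)/SRev(F^k) > 0.56$.
   Context: For i.i.d. values $X_1,\dots,X_k\sim F$ of an additive buyer: $SRev(F^k) = k\cdot\sup_{p\ge0} p\,\mathbb{P}(X_1\ge p)$ is the maximal revenue from selling each item separately at posted prices, and $BRev(F^k) = \sup_{p\ge 0} p\,\mathbb{P}(X_1+\dots+X_k\ge p)$ is the maximal revenue from selling all items as one bundle at a posted price. For the given $F$, $SRev(F^k)=c$. *)

From mathcomp Require Import all_boot all_order all_algebra.
From mathcomp Require Import all_classical all_reals.
Set Implicit Arguments. Unset Strict Implicit. Unset Printing Implicit Defensive.
Import Order.TTheory GRing.Theory Num.Theory.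
Local Open Scope ring_scope.
Local Open Scope classical_set_scope.

Section Defs.
Variable R : realType.

Definition bern (q : R) (b : bool) : R := if b then q else 1 - q.

Definition bval (b : bool) : R := (b : nat)%:R.

Definition PrX1_ge (q p : R) : R :=
  \sum_(b : bool | p <= bval b) bern q b.

Definition PrSum_ge (k : nat) (q p : R) : R :=
  \sum_(x : {ffun 'I_k -> bool} | p <= \sum_(i < k) bval (x i))
     \prod_(i < k) bern q (x i).

Definition SRev (k : nat) (q : R) : R :=
  k%:R * sup [set p * PrX1_ge q p | p in [set p : R | 0 <= p]].

Definition BRev (k : nat) (q : R) : R :=
  sup [set p * PrSum_ge k q p | p in [set p : R | 0 <= p]].

End Defs.

From mathcomp Require Import all_boot all_order all_algebra.
From mathcomp Require Import all_classical all_reals.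
From mathcomp Require Import sequences exp.
From mathcomp Require Import ring lra.
Set Implicit Arguments. Unset Strict Implicit. Unset Printing Implicit Defensive.
Import Order.TTheory GRing.Theory Num.Theory.
Local Open Scope ring_scope.
Local Open Scope classical_set_scope.

(* Selling separately earns k * (c/k) = c.  For the bundle, post the price
   p = 0.65 c: the number of items of value 1 is Binomial(k, c/k) with mean
   c, and the Chernoff bound with parameter 1/2 gives
   P(S < p) <= exp(c (0.325 - (1 - e^(-1/2)))) <= e^(-0.055 c) <= e^(-2.2) < 10/73
   as c >= 40.  Hence BRev >= 0.65 c * 63/73 > 0.56 c. *)

Lemma expRN_le_invX (R : realType) (a : R) n :
  1 <= a -> expR (- ((a - 1) * n%:R)) <= (a ^+ n)^-1.
Proof.
move=> a1; rewrite expRN lef_pV2 ?posrE ?expR_gt0 ?exprn_gt0 //; last lra.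
rewrite expRM_natr lerXn2r ?nnegrE ?expR_ge0 //; first lra.
by have := expR_ge1Dx (a - 1); rewrite addrC subrK.
Qed.

Section BernoulliProduct.
Variables (R : realType) (k : nat) (q : R).
Hypothesis q01 : 0 <= q <= 1.

Definition bsum (x : {ffun 'I_k -> bool}) : R := \sum_(i < k) bval R (x i).

Definition bprob (x : {ffun 'I_k -> bool}) : R := \prod_(i < k) bern q (x i).

Lemma bprob_mgf (l : R) :
  \sum_x bprob x * expR (- l * bsum x) = (1 - q + q * expR (- l)) ^+ k.
Proof.
have -> : (1 - q + q * expR (- l)) ^+ k =
    \prod_(i < k) \sum_(b : bool) bern q b * expR (- l * bval R b).
  rewrite prodr_const card_ord; congr (_ ^+ _).
  by rewrite big_bool /= /bern /bval /= mulr1 mulr0 expR0 mulr1 addrC.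
rewrite (bigA_distr_bigA (fun i b => bern q b * expR (- l * bval R b))).
apply: eq_bigr => x _.
by rewrite /bprob /bsum mulr_sumr expR_sum -big_split.
Qed.

Lemma bprob_sum : \sum_x bprob x = 1.
Proof.
have := bprob_mgf 0; rewrite oppr0 expR0 mulr1 subrK expr1n => <-.
by apply: eq_bigr => x _; rewrite mul0r expR0 mulr1.
Qed.

Lemma bprob_ge0 x : 0 <= bprob x.
Proof.
have /andP[q0 q1] := q01.
by apply: prodr_ge0 => i _; rewrite /bern; case: (x i); rewrite ?subr_ge0.
Qed.

Lemma bsum_le x : bsum x <= k%:R.
Proof.
rewrite /bsum -[k in k%:R]card_ord -sumr_const.
by apply: ler_sum => i _; rewrite /bval; case: (x i).
Qed.

Lemma PrSum_geE p : PrSum_ge k q p = 1 - \sum_(x | bsum x < p) bprob x.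
Proof.
rewrite -bprob_sum (bigID (fun x => bsum x < p)) /= addrC addrK.
by apply: eq_bigl => x; rewrite -leNgt.
Qed.

Lemma chernoff_lower_tail (l p : R) : 0 <= l ->
  \sum_(x | bsum x < p) bprob x <= expR (l * p - k%:R * q * (1 - expR (- l))).
Proof.
move=> l0.
have markov : \sum_(x | bsum x < p) bprob x <=
    expR (l * p) * \sum_x bprob x * expR (- l * bsum x).
  rewrite mulr_sumr [X in _ <= X](bigID (fun x => bsum x < p)) /=.
  apply: ler_wpDr.
    apply: sumr_ge0 => x _.
    by rewrite mulr_ge0 ?expR_ge0 // mulr_ge0 ?expR_ge0 ?bprob_ge0.
  apply: ler_sum => x ltxp; rewrite mulrCA -expRD -[X in X <= _]mulr1.
  rewrite ler_wpM2l ?bprob_ge0 // -expR0 ler_expR mulNr -mulrBr.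
  by rewrite mulr_ge0 // subr_ge0 ltW.
have mgf_le : (1 - q + q * expR (- l)) ^+ k <=
    expR (- (k%:R * q * (1 - expR (- l)))).
  have -> : - (k%:R * q * (1 - expR (- l))) = - (q * (1 - expR (- l))) * k%:R.
    by ring.
  rewrite expRM_natr lerXn2r ?nnegrE ?expR_ge0 //.
    by have /andP[q0 q1] := q01; have := expR_gt0 (- l); nra.
  by have := expR_ge1Dx (- (q * (1 - expR (- l)))); lra.
apply: (le_trans markov); rewrite bprob_mgf expRD.
by rewrite ler_wpM2l ?expR_ge0.
Qed.

Lemma bsum_lt_13_20_le : 40 <= k%:R * q ->
  \sum_(x | bsum x < 13 / 20 * (k%:R * q)) bprob x <= 10 / 73.
Proof.
move=> c40; set c := k%:R * q in c40 *.
have eN1_2 : expR (- (1 / 2)) <= 62 / 100 :> R.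
  rewrite (_ : 1 / 2 = (21 / 20 - 1) * 10%:R); last lra.
  by apply: le_trans (expRN_le_invX _ _) _; lra.
have eN11_5 : expR (- (11 / 5)) <= 10 / 73 :> R.
  rewrite (_ : 11 / 5 = (61 / 50 - 1) * 10%:R); last lra.
  by apply: le_trans (expRN_le_invX _ _) _; lra.
apply: (le_trans (chernoff_lower_tail (13 / 20 * c) (_ : 0 <= 1 / 2))); first lra.
apply: le_trans eN11_5; rewrite ler_expR -/c.
have : c * (38 / 100) <= c * (1 - expR (- (1 / 2))) by rewrite ler_wpM2l; lra.
lra.
Qed.

End BernoulliProduct.

Section Revenues.
Variables (R : realType) (k : nat) (q : R).
Hypothesis q01 : 0 <= q <= 1.

Lemma SRev_bern : SRev k q = k%:R * q.
Proof.
have /andP[q0 q1] := q01; rewrite /SRev; congr (_ * _).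
have PrX1E p : PrX1_ge q p =
    (if p <= 1 then q else 0) + (if p <= 0 then 1 - q else 0).
  by rewrite /PrX1_ge big_mkcond big_bool /= /bval /bern /=.
set E := [set p * PrX1_ge q p | p in [set p : R | 0 <= p]].
have ubE : ubound E q.
  move=> _ [p /= p0 <-]; rewrite PrX1E.
  by case: (leP p 1) => p1; case: (leP p 0) => p00; rewrite ?addr0 ?mulr0 //; nra.
have Eq : E q by exists 1; rewrite /= ?ler01 // PrX1E lexx ler10 addr0 mul1r.
apply/le_anti/andP; split; first by apply: ge_sup => //; exists q.
by apply: ub_le_sup => //; exists q.
Qed.

Lemma le_BRev p : 0 <= p -> p * PrSum_ge k q p <= BRev k q.
Proof.
move=> p0; apply: ub_le_sup; last by exists p.
exists k%:R => _ [p' /= p'0 <-].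
have [p'k|kp'] := leP p' k%:R; last first.
  rewrite /PrSum_ge big1 ?mulr0 // => x lep'x.
  by have := le_lt_trans (le_trans lep'x (bsum_le R x)) kp'; rewrite ltxx.
rewrite -[X in _ <= X]mulr1 ler_pM // ?sumr_ge0 // => [x _|].
  exact: bprob_ge0.
by rewrite PrSum_geE // lerBlDr lerDl sumr_ge0 // => x _; apply: bprob_ge0.
Qed.

End Revenues.

Theorem lemma1 (R : realType) (k : nat) (c : R) :
  (1 <= k)%N -> 40 <= c -> c <= k%:R ->
  BRev k (c / k%:R) / SRev k (c / k%:R) > 56 / 100.
Proof.
move=> k1 c40 ck.
have k0 : (0 : R) < k%:R by rewrite ltr0n.
set q := c / k%:R.
have q01 : 0 <= q <= 1 by rewrite divr_ge0 ?ler_pdivrMr //= ?mul1r; lra.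
have kq : k%:R * q = c by rewrite mulrC divfK // gt_eqF.
rewrite SRev_bern // kq ltr_pdivlMr; last lra.
have := bsum_lt_13_20_le q01 (_ : 40 <= k%:R * q); rewrite kq => /(_ c40) tail.
have price_ge0 : 0 <= 13 / 20 * c by lra.
have := le_BRev k q01 price_ge0; rewrite PrSum_geE.
set T := \sum_(x | _) _ in tail *.
have : 13 / 20 * c * (63 / 73) <= 13 / 20 * c * (1 - T) by rewrite ler_wpM2l; lra.
lra.
Qed.
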